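(* For $\eta=(\eta_1,\dots,\eta_n)\in\mathbb{Z}_{\ge0}^n$ define $$h_\eta(x;q,t)=\prod_{i=1}^nt^{(i-1)\eta_i}\frac{(t;q)_\infty(q^{\eta_i+1};q)_\infty}{(tq^{\eta_i};q)_\infty(q;q)_\infty}\prod_{i<j}\frac{(q^{\eta_i-\eta_j}x_i/x_j;q)_\infty(q^{1-\eta_j}t^{-1}x_i/x_j;q)_\infty(tx_i/x_j;q)_\infty(q^{1+\eta_i}x_i/x_j;q)_\infty}{(q^{-\eta_j}x_i/x_j;q)_\infty(qt^{-1}x_i/x_j;q)_\infty(tq^{\eta_i}x_i/x_j;q)_\infty(q^{1+\eta_i-\eta_j}x_i/x_j;q)_\infty},$$ and define the operator $\mathbf{N}_n^z=\sum_{\eta_1,\dots,\eta_n=0}^\infty z^{|\eta|}h_\eta(x;q,t)\prod_{i=1}^n(T_{q,x_i})^{\eta_i}$, where $|\eta|=\eta_1+\dots+\eta_n$ and $(T_{q,x_i}F)(x_1,\dots,x_n)=F(x_1,\dots,qx_i,\dots,x_n)$. Then $$\mathbf{N}_n^z=\sum_{\eta_1,\dots,\eta_n=0}^\infty z^{|\eta|}\prod_{i<j}\frac{q^{\eta_j}x_j-q^{\eta_i}x_i}{x_j-x_i}\prod_{i,j=1}^n\frac{(tx_i/x_j;q)_{\eta_i}}{(qx_i/x_j;q)_{\eta_i}}\prod_{i=1}^n(T_{q,x_i})^{\eta_i},$$ i.e. for every $\eta\in\mathbb{Z}_{\ge0}^n$, $h_\eta(x;q,t)=\prod_{i<j}\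frac{q^{\eta_j}x_j-q^{\eta_i}x_i}{x_j-x_i}\prod_{i,j}\frac{(tx_i/x_j;q)_{\eta_i}}{(qx_i/x_j;q)_{\eta_i}}$.
   Context: $q,t\in[0,1)$; $(a;q)_\infty=\prod_{i\ge0}(1-aq^i)$ and $(a;q)_m=(1-a)(1-aq)\cdots(1-aq^{m-1})$. The identity is between functions of the formal/complex variables $x_1,\dots,x_n$ (meromorphic functions), coefficientwise in $z$. *)

From Stdlib Require Import Reals ZArith.
From Coquelicot Require Import Coquelicot.
Open Scope R_scope.

Fixpoint qpoch (a : C) (q : R) (m : nat) : C :=
  match m with
  | O => RtoC 1
  | S m' => Cmult (qpoch a q m') (Cminus (RtoC 1) (Cmult a (RtoC (q ^ m'))))
  end.

(* Infinite q-Pochhammer symbol (a;q)_oo = lim_m (a;q)_m, taken componentwise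
   (the limit exists for |q| < 1). *)
Definition qinf (a : C) (q : R) : C :=
  (real (Lim_seq (fun m => fst (qpoch a q m))),
   real (Lim_seq (fun m => snd (qpoch a q m)))).

Fixpoint prodC (f : nat -> C) (n : nat) : C :=
  match n with
  | O => RtoC 1
  | S n' => Cmult (prodC f n') (f n')
  end.

Definition qZ (q : R) (z : Z) : C := RtoC (powerRZ q z).

(* h_eta(x;q,t); variables x_1..x_n are x 0 .. x (n-1), eta_i is eta (i-1). *)
Definition h_eta (n : nat) (x : nat -> C) (q t : R) (eta : nat -> nat) : C :=
  Cmult
   (prodC (fun i =>
      Cdiv (Cmult (RtoC (t ^ (i * eta i)))
                  (Cmult (qinf (RtoC t) q) (qinf (RtoC (q ^ (eta i + 1))) q)))
           (Cmult (qinf (RtoC (t * q ^ eta i)) q) (qinf (RtoC q) q))) n)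
   (prodC (fun j => prodC (fun i =>
      let r := Cdiv (x i) (x j) in
      let ei := Z.of_nat (eta i) in let ej := Z.of_nat (eta j) in
      Cdiv
        (Cmult (Cmult (Cmult
           (qinf (Cmult (qZ q (ei - ej)) r) q)
           (qinf (Cmult (RtoC (powerRZ q (1 - ej) / t)) r) q))
           (qinf (Cmult (RtoC t) r) q))
           (qinf (Cmult (qZ q (1 + ei)) r) q))
        (Cmult (Cmult (Cmult
           (qinf (Cmult (qZ q (- ej)) r) q)
           (qinf (Cmult (RtoC (q / t)) r) q))
           (qinf (Cmult (RtoC (t * q ^ eta i)) r) q))
           (qinf (Cmult (qZ q (1 + ei - ej)) r) q))) j) n).

Definition h_eta_closed (n : nat) (x : nat -> C) (q t : R) (eta : nat -> nat) : C :=
  Cmult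
   (prodC (fun j => prodC (fun i =>
      Cdiv (Cminus (Cmult (RtoC (q ^ eta j)) (x j)) (Cmult (RtoC (q ^ eta i)) (x i)))
           (Cminus (x j) (x i))) j) n)
   (prodC (fun i => prodC (fun j =>
      Cdiv (qpoch (Cmult (RtoC t) (Cdiv (x i) (x j))) q (eta i))
           (qpoch (Cmult (RtoC q) (Cdiv (x i) (x j))) q (eta i))) n) n).

(* Every factor of h_eta is a ratio of infinite products whose arguments
   differ by integral powers of q, so the splitting
   (a;q)_oo = (a;q)_k (a q^k;q)_oo cancels all infinite products and leaves
   finite ones.  On the diagonal this gives (t;q)_{eta_i} / (q;q)_{eta_i}.
   For a pair i < j, reversing the factors of the two remaining products of
   length eta_j turns the argument x_i/x_j into x_j/x_i: this produces the
   (j, i) factor of the closed form together with (q/t)^{eta_j}, and the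
   leftover (1 - q^{eta_i - eta_j} x_i/x_j) / (1 - x_i/x_j) times q^{eta_j}
   is the ratio (q^{eta_j} x_j - q^{eta_i} x_i) / (x_j - x_i).  The powers
   t^{(i-1) eta_i} on the diagonal supply exactly the t^{eta_j} these pairs
   need.  The infinite products converge because the increments of the
   partial products decay geometrically, and the real ones met on the
   diagonal are nonzero by the Weierstrass product inequality. *)

From Stdlib Require Import Reals ZArith Lra Lia.
From Coquelicot Require Import Coquelicot.
Open Scope R_scope.

Lemma sum_n_telescope (u : nat -> R) (m : nat) :
  sum_n (fun k => u (S k) - u k) m = u (S m) - u O.
Proof.
  induction m as [|m IH].
  - now rewrite sum_O.
  - rewrite sum_Sn, IH. unfold plus; simpl. ring.
Qed.

Lemma ex_lim_seq_geometric_increments (u : nat -> R) (K q : R) :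
  0 <= q < 1 -> (forall m, Rabs (u (S m) - u m) <= K * q ^ m) ->
  exists l : R, is_lim_seq u l.
Proof.
  intros Hq Hu.
  assert (Hs : ex_series (fun m => u (S m) - u m)).
  { apply (@ex_series_le R_AbsRing R_CompleteNormedModule _ (fun m => K * q ^ m)); [exact Hu|].
    apply (@ex_series_scal_l R_AbsRing R_NormedModule K (fun m => q ^ m)).
    apply ex_series_geom. rewrite Rabs_pos_eq; lra. }
  destruct Hs as [s Hs]. exists (u O + s).
  apply is_lim_seq_incr_1.
  apply is_lim_seq_ext with (fun m => u O + sum_n (fun k => u (S k) - u k) m).
  - intros m. rewrite sum_n_telescope. ring.
  - apply is_lim_seq_plus'; [apply is_lim_seq_const | exact Hs].
Qed.

Lemma exp_le_compat (x y : R) : x <= y -> exp x <= exp y.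
Proof. intros [Hlt|Heq]; [left; now apply exp_increasing | now rewrite Heq; right]. Qed.

Lemma Cmod_qpoch_le_exp_geom (a : C) (q : R) (m : nat) : 0 <= q < 1 ->
  Cmod (qpoch a q m) <= exp (Cmod a * (1 - q ^ m) / (1 - q)).
Proof.
  intros Hq. induction m as [|m IH]; simpl qpoch.
  - rewrite Cmod_1. replace (Cmod a * (1 - q ^ 0) / (1 - q)) with 0 by (simpl; field; lra).
    rewrite exp_0. lra.
  - assert (Hqm : 0 <= q ^ m) by (apply pow_le; lra).
    assert (Hfactor : Cmod (Cminus 1 (Cmult a (RtoC (q ^ m)))) <= exp (Cmod a * q ^ m)).
    { eapply Rle_trans; [apply Cmod_triangle|].
      rewrite Cmod_opp, Cmod_mult, !Cmod_R, Rabs_R1, (Rabs_pos_eq (q ^ m)) by exact Hqm.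
      apply exp_ineq1_le. }
    replace (Cmod a * (1 - q ^ S m) / (1 - q))
      with (Cmod a * (1 - q ^ m) / (1 - q) + Cmod a * q ^ m) by (simpl; field; lra).
    rewrite exp_plus, Cmod_mult.
    apply Rmult_le_compat; auto using Cmod_ge_0.
Qed.

Lemma Cmod_qpoch_le_exp (a : C) (q : R) (m : nat) : 0 <= q < 1 ->
  Cmod (qpoch a q m) <= exp (Cmod a / (1 - q)).
Proof.
  intros Hq. eapply Rle_trans; [now apply Cmod_qpoch_le_exp_geom|].
  apply exp_le_compat. unfold Rdiv. apply Rmult_le_compat_r.
  - left. apply Rinv_0_lt_compat. lra.
  - assert (0 <= q ^ m) by (apply pow_le; lra).
    pose proof (Cmod_ge_0 a). nra.
Qed.

Lemma ex_lim_seq_qpoch (a : C) (q : R) : 0 <= q < 1 ->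
  (exists l : R, is_lim_seq (fun m => fst (qpoch a q m)) l) /\
  (exists l : R, is_lim_seq (fun m => snd (qpoch a q m)) l).
Proof.
  intros Hq. set (K := exp (Cmod a / (1 - q)) * Cmod a).
  assert (Hstep : forall m, Cmod (Cminus (qpoch a q (S m)) (qpoch a q m)) <= K * q ^ m).
  { intros m.
    replace (Cminus (qpoch a q (S m)) (qpoch a q m))
      with (Copp (Cmult (qpoch a q m) (Cmult a (RtoC (q ^ m))))) by (simpl; ring).
    rewrite Cmod_opp, !Cmod_mult, Cmod_R, Rabs_pos_eq by (apply pow_le; lra).
    unfold K. rewrite Rmult_assoc.
    apply Rmult_le_compat_r; [|now apply Cmod_qpoch_le_exp].
    apply Rmult_le_pos; [apply Cmod_ge_0 | apply pow_le; lra]. }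
  split; apply (ex_lim_seq_geometric_increments _ K q Hq); intros m;
    eapply Rle_trans; try apply (Hstep m); eapply Rle_trans; try apply Rmax_Cmod.
  - apply Rmax_l.
  - apply Rmax_r.
Qed.

Lemma is_lim_seq_qpoch_qinf (a : C) (q : R) : 0 <= q < 1 ->
  is_lim_seq (fun m => fst (qpoch a q m)) (fst (qinf a q)) /\
  is_lim_seq (fun m => snd (qpoch a q m)) (snd (qinf a q)).
Proof.
  intros Hq. destruct (ex_lim_seq_qpoch a q Hq) as [[l1 H1] [l2 H2]].
  unfold qinf; simpl. rewrite (is_lim_seq_unique _ _ H1), (is_lim_seq_unique _ _ H2).
  now split.
Qed.

Lemma is_lim_seq_unique_R (u : nat -> R) (l1 l2 : R) :
  is_lim_seq u l1 -> is_lim_seq u l2 -> l1 = l2.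
Proof.
  intros H1 H2. apply is_lim_seq_unique in H1, H2.
  rewrite H1 in H2. now injection H2.
Qed.

Lemma qpoch_add (a : C) (q : R) (k m : nat) :
  qpoch a q (k + m) = Cmult (qpoch a q k) (qpoch (Cmult a (RtoC (q ^ k))) q m).
Proof.
  induction m as [|m IH].
  - rewrite Nat.add_0_r. simpl. ring.
  - rewrite Nat.add_succ_r. simpl qpoch. rewrite IH, pow_add, RtoC_mult. ring.
Qed.

Lemma qinf_split (a w : C) (q : R) (k : nat) : 0 <= q < 1 ->
  w = Cmult a (RtoC (q ^ k)) -> qinf a q = Cmult (qpoch a q k) (qinf w q).
Proof.
  intros Hq Hw. set (P := qpoch a q k).
  assert (Hshift : forall m, qpoch a q (m + k) = Cmult P (qpoch w q m)).
  { intros m. rewrite Nat.add_comm, Hw. apply qpoch_add. }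
  destruct (is_lim_seq_qpoch_qinf a q Hq) as [Ha1 Ha2].
  destruct (is_lim_seq_qpoch_qinf w q Hq) as [Hw1 Hw2].
  apply (is_lim_seq_incr_n _ k) in Ha1, Ha2.
  apply injective_projections; cbn [Cmult fst snd].
  - apply (is_lim_seq_unique_R _ _ _ Ha1).
    apply is_lim_seq_ext with (fun m => fst P * fst (qpoch w q m) - snd P * snd (qpoch w q m)).
    { intros m. now rewrite Hshift. }
    apply is_lim_seq_minus'; (apply is_lim_seq_mult'; [apply is_lim_seq_const | assumption]).
  - apply (is_lim_seq_unique_R _ _ _ Ha2).
    apply is_lim_seq_ext with (fun m => fst P * snd (qpoch w q m) + snd P * fst (qpoch w q m)).
    { intros m. now rewrite Hshift. }
    apply is_lim_seq_plus'; (apply is_lim_seq_mult'; [apply is_lim_seq_const | assumption]).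
Qed.

Lemma pow_unit_interval (x : R) (m : nat) : 0 <= x <= 1 -> 0 <= x ^ m <= 1.
Proof. intros Hx. split; [apply pow_le; lra | rewrite <- (pow1 m); apply pow_incr; lra]. Qed.

Lemma qpoch_real_snd (c q : R) (m : nat) : snd (qpoch (RtoC c) q m) = 0.
Proof. induction m as [|m IH]; simpl; [reflexivity | rewrite IH; ring]. Qed.

Lemma qpoch_real_fst_S (c q : R) (m : nat) :
  fst (qpoch (RtoC c) q (S m)) = fst (qpoch (RtoC c) q m) * (1 - c * q ^ m).
Proof. simpl qpoch. cbn [Cmult Cminus Cplus Copp RtoC fst snd]. rewrite qpoch_real_snd. ring. Qed.

Lemma qpoch_real_pos (c q : R) (m : nat) : 0 <= q < 1 -> 0 <= c < 1 ->
  0 < fst (qpoch (RtoC c) q m).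
Proof.
  intros Hq Hc. induction m as [|m IH]; [simpl; lra|].
  rewrite qpoch_real_fst_S. apply Rmult_lt_0_compat; [exact IH|].
  pose proof (pow_unit_interval q m ltac:(lra)). nra.
Qed.

Lemma qpoch_real_weierstrass (c q : R) (m : nat) : 0 <= q < 1 -> 0 <= c <= 1 ->
  1 - c * (1 - q ^ m) / (1 - q) <= fst (qpoch (RtoC c) q m).
Proof.
  intros Hq Hc. induction m as [|m IH].
  - simpl. replace (c * (1 - 1) / (1 - q)) with 0 by (field; lra). lra.
  - rewrite qpoch_real_fst_S.
    pose proof (pow_unit_interval q m ltac:(lra)).
    set (s := (1 - q ^ m) / (1 - q)).
    assert (Hs : 0 <= s) by (apply Rdiv_le_0_compat; lra).
    replace (c * (1 - q ^ S m) / (1 - q)) with (c * s + c * q ^ m) by (unfold s; simpl; field; lra).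
    replace (c * (1 - q ^ m) / (1 - q)) with (c * s) in IH by (unfold s; field; lra).
    assert (Hf : 0 <= 1 - c * q ^ m) by nra.
    assert (0 <= c * s * (c * q ^ m)) by (apply Rmult_le_pos; apply Rmult_le_pos; lra).
    apply Rmult_le_compat_r with (r := 1 - c * q ^ m) in IH; [|exact Hf]. nra.
Qed.

(* Once q^K <= (1 - q)/2, the Weierstrass bound keeps every partial product of
   (c q^K; q)_oo above 1/2. *)
Lemma qinf_real_neq0 (c q : R) : 0 <= q < 1 -> 0 <= c < 1 -> qinf (RtoC c) q <> RtoC 0.
Proof.
  intros Hq Hc.
  destruct (pow_lt_1_zero q ltac:(rewrite Rabs_pos_eq; lra) ((1 - q) / 2) ltac:(lra)) as [K HK].
  specialize (HK K (le_n K)). rewrite Rabs_pos_eq in HK by (apply pow_le; lra).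
  set (d := c * q ^ K).
  assert (Hd : 0 <= d <= (1 - q) / 2).
  { assert (0 <= q ^ K) by (apply pow_le; lra). unfold d. split; nra. }
  rewrite (qinf_split _ (RtoC d) q K Hq) by apply RtoC_mult.
  apply Cmult_neq_0; intros E.
  - apply (f_equal fst) in E. pose proof (qpoch_real_pos c q K Hq Hc). simpl in E. lra.
  - destruct (is_lim_seq_qpoch_qinf (RtoC d) q Hq) as [Hlim _]. rewrite E in Hlim.
    assert (Hhalf : forall m, 1 / 2 <= fst (qpoch (RtoC d) q m)).
    { intros m. eapply Rle_trans; [|apply qpoch_real_weierstrass; lra].
      assert (0 <= q ^ m) by (apply pow_le; lra).
      assert (d * (1 - q ^ m) / (1 - q) <= 1 / 2).
      { apply (Rmult_le_reg_r (1 - q)); [lra|].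
        replace (d * (1 - q ^ m) / (1 - q) * (1 - q)) with (d * (1 - q ^ m)) by (field; lra).
        nra. }
      lra. }
    pose proof (is_lim_seq_le (fun _ => 1 / 2) _ (1 / 2) 0 Hhalf (is_lim_seq_const _) Hlim).
    simpl in *. lra.
Qed.

Lemma RtoC_neq_0 (x : R) : x <> 0 -> RtoC x <> RtoC 0.
Proof. intros Hx E. apply Hx. now injection E. Qed.

Lemma powerRZ_1 (x : R) : powerRZ x 1 = x.
Proof. simpl. ring. Qed.

Section QPochhammer.

Local Open Scope C_scope.

Lemma qpoch_S_head (a d : C) (q : R) (m : nat) :
  d = a * RtoC q -> qpoch a q (S m) = (1 - a) * qpoch d q m.
Proof.
  intros ->. change (S m) with (1 + m)%nat. rewrite qpoch_add. simpl.
  rewrite Rmult_1_r. ring.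
Qed.

(* Reversing its factors gives (z q^{-m}; q)_m = (-z)^m q^{-m(m+1)/2} (q/z; q)_m;
   this is the quotient of that identity for z = c y and z = y. *)
Lemma qpoch_reflect (c y : C) (q : R) (m : nat) : RtoC q <> 0 -> c <> 0 -> y <> 0 ->
  qpoch (c * y / RtoC q ^ m) q m * qpoch (RtoC q / y) q m
  = c ^ m * qpoch (y / RtoC q ^ m) q m * qpoch (RtoC q / (c * y)) q m.
Proof.
  intros Hq Hc Hy. induction m as [|m IH]; [simpl; ring|].
  assert (Hqm := Cpow_nz _ m Hq).
  rewrite (qpoch_S_head (c * y / RtoC q ^ S m) (c * y / RtoC q ^ m)),
    (qpoch_S_head (y / RtoC q ^ S m) (y / RtoC q ^ m)) by (rewrite Cpow_S; field; auto).
  simpl qpoch. rewrite RtoC_pow, !Cpow_S.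
  transitivity ((1 - c * y / (RtoC q * RtoC q ^ m)) * (1 - RtoC q / y * RtoC q ^ m)
                * (qpoch (c * y / RtoC q ^ m) q m * qpoch (RtoC q / y) q m)); [ring|].
  rewrite IH. field. auto.
Qed.

End QPochhammer.

Section Factors.

Local Open Scope C_scope.

Variables (q t : R).
Hypothesis Hq : (0 < q < 1)%R.
Local Notation Q := (RtoC q).
Local Notation T := (RtoC t).

Lemma qinf_offdiag_ratio (r : C) (a b : nat) : t <> 0%R -> r <> 0 -> r <> 1 ->
  qinf (/ Q ^ b * r) q <> 0 -> qinf (Q / T * r) q <> 0 ->
  qinf (T * Q ^ a * r) q <> 0 -> qinf (Q * Q ^ a / Q ^ b * r) q <> 0 ->
  qpoch (Q * r) q a <> 0 -> qpoch (Q / r) q b <> 0 ->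
  qinf (Q ^ a / Q ^ b * r) q * qinf (Q / Q ^ b / T * r) q * qinf (T * r) q
    * qinf (Q * Q ^ a * r) q
  / (qinf (/ Q ^ b * r) q * qinf (Q / T * r) q * qinf (T * Q ^ a * r) q
    * qinf (Q * Q ^ a / Q ^ b * r) q) * T ^ b
  = (Q ^ b - Q ^ a * r) / (1 - r)
    * (qpoch (T * r) q a / qpoch (Q * r) q a * (qpoch (T / r) q b / qpoch (Q / r) q b)).
Proof.
  intros Ht Hr Hr1 HD1 HD2 HD3 HD4 HA HB.
  assert (Hq1 : (0 <= q < 1)%R) by lra.
  assert (HQ : Q <> 0) by (apply RtoC_neq_0; lra).
  assert (HT : T <> 0) by (apply RtoC_neq_0; lra).
  assert (HQb := Cpow_nz Q b HQ). assert (HTb := Cpow_nz T b HT).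
  (* Split each infinite product down to its partner across the fraction bar. *)
  rewrite (qinf_split (Q ^ a / Q ^ b * r) (Q * Q ^ a / Q ^ b * r) q 1 Hq1)
    by (rewrite RtoC_pow; field; auto).
  rewrite (qinf_split (Q / Q ^ b / T * r) (Q / T * r) q b Hq1)
    by (rewrite RtoC_pow; field; auto).
  rewrite (qinf_split (T * r) (T * Q ^ a * r) q a Hq1) by (rewrite RtoC_pow; ring).
  rewrite (qinf_split (/ Q ^ b * r) (Q * Q ^ a * r) q (b + S a) Hq1) in HD1 |- *
    by (rewrite RtoC_pow, Cpow_add_r, Cpow_S; field; auto).
  rewrite qpoch_add in HD1 |- *.
  replace (/ Q ^ b * r * RtoC (q ^ b)) with r in HD1 |- * by (rewrite RtoC_pow; field; auto).
  rewrite (qpoch_S_head r (Q * r)) in HD1 |- * by ring.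
  assert (HQT : Q / T <> 0).
  { intros E. apply HQ. replace Q with (Q / T * T) by (field; auto). rewrite E. ring. }
  assert (Hrefl := qpoch_reflect (Q / T) r q b HQ HQT Hr).
  replace (Q / T * r / Q ^ b) with (Q / Q ^ b / T * r) in Hrefl by (field; auto).
  replace (Q / (Q / T * r)) with (T / r) in Hrefl by (field; auto).
  replace (r / Q ^ b) with (/ Q ^ b * r) in Hrefl by (field; auto).
  assert (HY : qpoch (/ Q ^ b * r) q b <> 0) by (intros E; apply HD1; rewrite E; ring).
  assert (HN : qinf (Q * Q ^ a * r) q <> 0) by (intros E; apply HD1; rewrite E; ring).
  assert (Hr1' : 1 - r <> 0) by (intros E; apply Hr1; rewrite <- (Cplus_0_l r), <- E; ring).
  replace (qpoch (Q / Q ^ b / T * r) q b)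
    with ((Q / T) ^ b * qpoch (/ Q ^ b * r) q b * qpoch (T / r) q b / qpoch (Q / r) q b)
    by (rewrite <- Hrefl; field; auto).
  replace ((Q / T) ^ b) with (Q ^ b / T ^ b)
    by (unfold Cdiv; rewrite Cpow_mult_l, Cpow_inv by exact HT; reflexivity).
  simpl qpoch.
  field. repeat split; auto.
Qed.

Lemma qinf_diag_ratio (a : nat) : (0 < t < 1)%R -> qpoch Q q a <> 0 ->
  qinf T q * qinf (RtoC (q ^ (a + 1))) q / (qinf (RtoC (t * q ^ a)) q * qinf Q q)
  = qpoch T q a / qpoch Q q a.
Proof.
  intros Ht HA.
  assert (Hq1 : (0 <= q < 1)%R) by lra.
  pose proof (pow_unit_interval q a ltac:(lra)).
  assert (HN : qinf (RtoC (t * q ^ a)) q <> 0) by (apply qinf_real_neq0; [lra | nra]).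
  assert (HD : qinf (RtoC (q ^ (a + 1))) q <> 0)
    by (apply qinf_real_neq0; [lra | rewrite pow_add; simpl; nra]).
  rewrite (qinf_split T (RtoC (t * q ^ a)) q a Hq1) by apply RtoC_mult.
  rewrite (qinf_split Q (RtoC (q ^ (a + 1))) q a Hq1)
    by (rewrite <- RtoC_mult, pow_add; f_equal; simpl; ring).
  field. auto.
Qed.

End Factors.

Definition h_diag (q t : R) (k a : nat) : C :=
  Cdiv (Cmult (RtoC (t ^ (k * a)))
              (Cmult (qinf (RtoC t) q) (qinf (RtoC (q ^ (a + 1))) q)))
       (Cmult (qinf (RtoC (t * q ^ a)) q) (qinf (RtoC q) q)).

Definition h_offdiag (q t : R) (xi xj : C) (a b : nat) : C :=
  let r := Cdiv xi xj in
  let ei := Z.of_nat a in let ej := Z.of_nat b in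
  Cdiv
    (Cmult (Cmult (Cmult
       (qinf (Cmult (qZ q (ei - ej)) r) q)
       (qinf (Cmult (RtoC (powerRZ q (1 - ej) / t)) r) q))
       (qinf (Cmult (RtoC t) r) q))
       (qinf (Cmult (qZ q (1 + ei)) r) q))
    (Cmult (Cmult (Cmult
       (qinf (Cmult (qZ q (- ej)) r) q)
       (qinf (Cmult (RtoC (q / t)) r) q))
       (qinf (Cmult (RtoC (t * q ^ a)) r) q))
       (qinf (Cmult (qZ q (1 + ei - ej)) r) q)).

Section Assembly.

Local Open Scope C_scope.

Lemma prodC_mult (f g : nat -> C) (n : nat) :
  prodC (fun k => f k * g k) n = prodC f n * prodC g n.
Proof. induction n as [|n IH]; simpl; [ring | rewrite IH; ring]. Qed.

Lemma prodC_ext (f g : nat -> C) (n : nat) :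
  (forall k, (k < n)%nat -> f k = g k) -> prodC f n = prodC g n.
Proof.
  induction n as [|n IH]; intros Hfg; simpl; [reflexivity|].
  rewrite IH by (intros; apply Hfg; lia). rewrite Hfg by lia. reflexivity.
Qed.

Lemma prodC_square (G : nat -> nat -> C) (n : nat) :
  prodC (fun i => prodC (fun j => G i j) n) n =
  prodC (fun j => G j j * prodC (fun i => G i j * G j i) j) n.
Proof.
  induction n as [|n IH]; [reflexivity|].
  change (prodC (fun i => prodC (fun j => G i j) n * G i n) n
          * (prodC (fun j => G n j) n * G n n)
          = prodC (fun j => G j j * prodC (fun i => G i j * G j i) j) n
          * (G n n * prodC (fun i => G i n * G n i) n)).
  rewrite <- IH, !prodC_mult. change (prodC (G n) n) with (prodC (fun j => G n j) n). ring.
Qed.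

Lemma prodC_regroup_pairs (n : nat) (D T : nat -> C) (F V G : nat -> nat -> C) :
  (forall j, (j < n)%nat -> D j = prodC (fun _ => T j) j * G j j) ->
  (forall i j, (i < j < n)%nat -> F i j * T j = V i j * (G i j * G j i)) ->
  prodC D n * prodC (fun j => prodC (fun i => F i j) j) n
  = prodC (fun j => prodC (fun i => V i j) j) n * prodC (fun i => prodC (fun j => G i j) n) n.
Proof.
  intros HD HF. rewrite prodC_square, (prodC_ext _ _ n HD), <- !prodC_mult.
  apply prodC_ext. intros j Hj.
  transitivity (G j j * prodC (fun i => F i j * T j) j); [rewrite prodC_mult; ring|].
  rewrite (prodC_ext _ (fun i => V i j * (G i j * G j i)) j) by (intros; apply HF; lia).
  rewrite prodC_mult. ring.
Qed.

Lemma RtoC_pow_mul_prodC (c : R) (k a : nat) :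
  RtoC (c ^ (k * a)) = prodC (fun _ => RtoC (c ^ a)) k.
Proof.
  induction k as [|k IH]; [reflexivity|].
  simpl prodC. rewrite <- IH, <- RtoC_mult, <- pow_add. do 2 f_equal. lia.
Qed.

Lemma h_diag_closed (q t : R) (k a : nat) : (0 < q < 1)%R -> (0 < t < 1)%R ->
  qpoch (RtoC q) q a <> 0 ->
  h_diag q t k a = prodC (fun _ => RtoC (t ^ a)) k * (qpoch (RtoC t) q a / qpoch (RtoC q) q a).
Proof.
  intros Hq Ht HA. unfold h_diag.
  rewrite <- RtoC_pow_mul_prodC, <- qinf_diag_ratio by assumption.
  unfold Cdiv. ring.
Qed.

Lemma h_offdiag_closed (q t : R) (xi xj : C) (a b : nat) :
  (0 < q < 1)%R -> t <> 0%R -> xi <> 0 -> xj <> 0 -> xi <> xj ->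
  qinf (Cmult (qZ q (- Z.of_nat b)) (Cdiv xi xj)) q <> 0 ->
  qinf (Cmult (RtoC (q / t)) (Cdiv xi xj)) q <> 0 ->
  qinf (Cmult (RtoC (t * q ^ a)) (Cdiv xi xj)) q <> 0 ->
  qinf (Cmult (qZ q (1 + Z.of_nat a - Z.of_nat b)) (Cdiv xi xj)) q <> 0 ->
  qpoch (Cmult (RtoC q) (Cdiv xi xj)) q a <> 0 ->
  qpoch (Cmult (RtoC q) (Cdiv xj xi)) q b <> 0 ->
  h_offdiag q t xi xj a b * RtoC (t ^ b)
  = Cdiv (Cminus (Cmult (RtoC (q ^ b)) xj) (Cmult (RtoC (q ^ a)) xi)) (Cminus xj xi)
    * (Cdiv (qpoch (Cmult (RtoC t) (Cdiv xi xj)) q a)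
            (qpoch (Cmult (RtoC q) (Cdiv xi xj)) q a)
       * Cdiv (qpoch (Cmult (RtoC t) (Cdiv xj xi)) q b)
              (qpoch (Cmult (RtoC q) (Cdiv xj xi)) q b)).
Proof.
  intros Hq Ht Hi Hj Hij HD1 HD2 HD3 HD4 HA HB.
  assert (Hqb := pow_nonzero q b ltac:(lra)).
  unfold h_offdiag, qZ in *. cbv zeta. unfold Z.sub in *.
  rewrite !powerRZ_add, !powerRZ_neg', <- !pow_powerRZ, !powerRZ_1 in * by lra.
  rewrite !RtoC_div, !RtoC_mult, !RtoC_inv, !RtoC_pow in * by auto.
  assert (Hr1 : xi / xj <> 1).
  { intros E. apply Hij. replace xi with (xi / xj * xj) by (field; auto). rewrite E. ring. }
  assert (Hji : xj - xi <> 0).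
  { intros E. apply Hij. rewrite <- (Cplus_0_l xi), <- E. ring. }
  replace (xj / xi) with (/ (xi / xj)) in * by (field; auto).
  replace ((RtoC q ^ b * xj - RtoC q ^ a * xi) / (xj - xi))
    with ((RtoC q ^ b - RtoC q ^ a * (xi / xj)) / (1 - xi / xj)).
  - apply qinf_offdiag_ratio; auto. intros E. apply Hi.
    replace xi with (xi / xj * xj) by (field; auto). rewrite E. ring.
  - field. repeat split; auto.
Qed.

End Assembly.

Theorem proposition3p8 (n : nat) (q t : R) (x : nat -> C) (eta : nat -> nat) :
  0 < q < 1 -> 0 < t < 1 ->
  (forall i, (i < n)%nat -> x i <> RtoC 0) ->
  (forall i j, (i < j < n)%nat -> x i <> x j) ->
  (* the infinite-product denominators of h_eta are nonzero *)
  (forall i j, (i < j < n)%nat ->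
     let r := Cdiv (x i) (x j) in
     let ei := Z.of_nat (eta i) in let ej := Z.of_nat (eta j) in
     qinf (Cmult (qZ q (- ej)) r) q <> RtoC 0 /\
     qinf (Cmult (RtoC (q / t)) r) q <> RtoC 0 /\
     qinf (Cmult (RtoC (t * q ^ eta i)) r) q <> RtoC 0 /\
     qinf (Cmult (qZ q (1 + ei - ej)) r) q <> RtoC 0) ->
  (* the finite-product denominators of the closed form are nonzero *)
  (forall i j, (i < n)%nat -> (j < n)%nat ->
     qpoch (Cmult (RtoC q) (Cdiv (x i) (x j))) q (eta i) <> RtoC 0) ->
  h_eta n x q t eta = h_eta_closed n x q t eta.
Proof.
  intros Hq Ht Hx Hxy Hinf Hfin.
  change (h_eta n x q t eta) with
    (Cmult (prodC (fun i => h_diag q t i (eta i)) n)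
       (prodC (fun j => prodC (fun i => h_offdiag q t (x i) (x j) (eta i) (eta j)) j) n)).
  unfold h_eta_closed.
  apply prodC_regroup_pairs with (T := fun j => RtoC (t ^ eta j)).
  - intros j Hj. specialize (Hfin j j Hj Hj).
    replace (Cdiv (x j) (x j)) with (RtoC 1) in * by (field; auto).
    rewrite !Cmult_1_r in *. now apply h_diag_closed.
  - intros i j Hij. destruct (Hinf i j Hij) as (H1 & H2 & H3 & H4).
    apply h_offdiag_closed; auto; try lra; (apply Hx || apply Hfin); lia.
Qed.
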